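(* Let $N\ge 1$, let $\lambda,\mu$ be parameters, and let $\psi(\xi)=\xi\log\xi-\xi$. For $y,z\in\mathbb{R}^N$ (indices modulo $N$) define $$\Lambda(y,z;\nu)=\sum_{k=1}^N\psi(z_k-y_k)-\sum_{k=1}^N\psi(\nu+y_{k+1}-z_k).$$ Let $x,\widetilde{x},\widehat{x},\widehat{\widetilde{x}}\in\mathbb{R}^N$ (indices modulo $N$, all arguments of $\psi$ below lying in its domain) satisfy for all $k$ the corner equations $$(E)\ (\widetilde{x}_k-x_k)(\lambda+x_k-\widetilde{x}_{k-1})=(\widehat{x}_k-x_k)(\mu+x_k-\widehat{x}_{k-1}),$$ $$(E_1)\ (\widetilde{x}_k-x_k)(\lambda+x_{k+1}-\widetilde{x}_k)=(\widehat{\widetilde{x}}_k-\widetilde{x}_k)(\mu+\widetilde{x}_k-\widehat{\widetilde{x}}_{k-1}),$$ $$(E_2)\ (\widehat{x}_k-x_k)(\mu+x_{k+1}-\widehat{x}_k)=(\widehat{\widetilde{x}}_k-\widehat{x}_k)(\lambda+\widehat{x}_k-\widehat{\widetilde{x}}_{k-1}),$$ $$(E_{12})\ (\widehat{\widetilde{x}}_k-\widehat{x}_k)(\lambda+\widehat{x}_{k+1}-\widehat{\widetilde{x}}_k)=(\widehat{\widetilde{x}}_k-\widetilde{x}_k)(\mu+\widetilde{x}_{k+1}-\widehat{\widetilde{x}}_k).$$ Then the discrete multi-time Lagrangian 1-form is closed on this solution: $$\Lambda(x,\widetilde{x};\lambda)+\Lambda(\widetilde{x},\widehat{\widetilde{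x}};\mu)-\Lambda(x,\widehat{x};\mu)-\Lambda(\widehat{x},\widehat{\widetilde{x}};\lambda)=0.$$
   Context: $\Lambda(\cdot,\cdot;\nu)$ is the generating function of the Bäcklund transformation $F_\nu$ of the periodic dual Toda lattice $\ddot x_k=\dot x_k(x_{k+1}-2x_k+x_{k-1})$ via $p=-\partial\Lambda/\partial x$, $\widetilde p=\partial\Lambda/\partial\widetilde x$; the corner equations are obtained by eliminating momenta. Only periodic boundary conditions are considered. *)

(* concrete reals R. Vectors in R^N are functions nat -> R,
   with meaningful entries at indices 0..N-1; indices are taken modulo N. *)
From Stdlib Require Import Reals List Arith.
Import ListNotations.
Open Scope R_scope.

Definition psi (t : R) : R := t * ln t - t.

Definition nxt (N k : nat) : nat := ((k + 1) mod N)%nat.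
Definition prv (N k : nat) : nat := ((k + N - 1) mod N)%nat.

Definition sumN (N : nat) (f : nat -> R) : R :=
  fold_right Rplus 0 (map f (seq 0 N)).

Definition Lambda (N : nat) (y z : nat -> R) (nu : R) : R :=
  sumN N (fun k => psi (z k - y k)) - sumN N (fun k => psi (nu + y (nxt N k) - z k)).

Definition Lambda_dom (N : nat) (y z : nat -> R) (nu : R) : Prop :=
  forall k, (k < N)%nat -> 0 < z k - y k /\ 0 < nu + y (nxt N k) - z k.

(* Expanding psi t = t ln t - t, the alternating sum of the four actions is a
   sum over sites k of a local term F_k.  Each corner equation equates two
   products of psi-arguments, so it balances the corresponding logarithms;
   grouping the terms of F_k by the variable they multiply, these balances
   turn F_k into Z_(k+1) - Z_k for an explicit potential Z, and the sum
   telescopes around the cycle.  Besides the four corner equations, one needs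
   the consequence (mu + x_(k+1) - xh_k)(lam + xh_(k+1) - xth_k)
   = (lam + x_(k+1) - xt_k)(mu + xt_(k+1) - xth_k) of E at k+1 and E12 at k;
   it also makes U_k = lam - mu + xh_k - xt_k scale like
   lam + x_(k+1) - xt_k, which produces the term (lam - mu) ln |U_k| of Z. *)
From Stdlib Require Import Reals Lra Lia List Arith.
Open Scope R_scope.

Lemma ln_mult_eq p q r s : 0 < p -> 0 < q -> 0 < r -> 0 < s ->
  p * q = r * s -> ln p + ln q = ln r + ln s.
Proof. intros Hp Hq Hr Hs Hpq. rewrite <- !ln_mult by assumption. now rewrite Hpq. Qed.

Lemma ln_ratio_Rabs c p q u v : 0 < p -> 0 < q -> p * u = q * v ->
  (u = 0 -> c = 0) -> c * (ln p - ln q) = c * (ln (Rabs v) - ln (Rabs u)).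
Proof.
  intros Hp Hq Huv Hc.
  destruct (Req_dec u 0) as [Hu | Hu]; [rewrite (Hc Hu); ring |].
  assert (Hv : v <> 0).
  { intros ->. apply Hu. apply (Rmult_eq_reg_l p); [lra | lra]. }
  assert (Habs : p * Rabs u = q * Rabs v).
  { rewrite <- (Rabs_pos_eq p), <- (Rabs_pos_eq q), <- !Rabs_mult by lra.
    now rewrite Huv. }
  pose proof (ln_mult_eq _ _ _ _ Hp (Rabs_pos_lt _ Hu) Hq (Rabs_pos_lt _ Hv) Habs).
  f_equal. lra.
Qed.

Section CornerAlgebra.
(* The corner equation E at site k+1 and E12 at site k, in the variables
   x1 = x_(k+1), t0 t1 = xt_k xt_(k+1), h0 h1 = xh_k xh_(k+1), X = xth_k. *)
Variables lam mu x1 t0 t1 h0 h1 X : R.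
Hypothesis E : (t1 - x1) * (lam + x1 - t0) = (h1 - x1) * (mu + x1 - h0).
Hypothesis E12 : (X - h0) * (lam + h1 - X) = (X - t0) * (mu + t1 - X).
Hypotheses (Hh1 : 0 < h1 - x1) (Ht0 : 0 < lam + x1 - t0).

Lemma corner_cross :
  (mu + x1 - h0) * (lam + h1 - X) = (lam + x1 - t0) * (mu + t1 - X).
Proof.
  assert (Hkey : (h1 - x1 + (lam + x1 - t0))
      * ((mu + x1 - h0) * (lam + h1 - X) - (lam + x1 - t0) * (mu + t1 - X)) = 0).
  { transitivity ((lam + x1 - t0) * ((X - h0) * (lam + h1 - X) - (X - t0) * (mu + t1 - X))
                - (lam + h1 - X) * ((t1 - x1) * (lam + x1 - t0) - (h1 - x1) * (mu + x1 - h0))).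
    - ring.
    - rewrite E, E12. ring. }
  apply Rmult_integral in Hkey as [Hkey | Hkey]; lra.
Qed.

Lemma corner_shift :
  (lam + h1 - X) * (lam - mu + h0 - t0) = (lam + x1 - t0) * (lam - mu + h1 - t1).
Proof. pose proof corner_cross. lra. Qed.

Lemma corner_shift_degenerate : lam - mu + h0 - t0 = 0 -> lam = mu.
Proof.
  intros HU.
  assert (HQ : (h1 - t1) * (lam + x1 - t0) = 0).
  { transitivity ((h1 - x1) * (lam - mu + h0 - t0)); [lra | rewrite HU; ring]. }
  apply Rmult_integral in HQ as [HQ | HQ]; [| lra].
  pose proof corner_shift as Hs. rewrite HU, Rmult_0_r in Hs.
  symmetry in Hs. apply Rmult_integral in Hs as [Hs | Hs]; lra.
Qed.

End CornerAlgebra.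

Lemma nxt_lt N k : (1 <= N)%nat -> (nxt N k < N)%nat.
Proof. intros HN. apply Nat.mod_upper_bound. lia. Qed.

Lemma prv_nxt N k : (1 <= N)%nat -> (k < N)%nat -> prv N (nxt N k) = k.
Proof.
  intros HN Hk. unfold prv, nxt.
  destruct (Nat.eq_dec (k + 1) N) as [Heq | Hne].
  - rewrite Heq, Nat.Div0.mod_same. rewrite Nat.mod_small; lia.
  - rewrite (Nat.mod_small (k + 1)) by lia.
    replace (k + 1 + N - 1)%nat with (k + 1 * N)%nat by lia.
    rewrite Nat.Div0.mod_add. apply Nat.mod_small. lia.
Qed.

Lemma fold_right_Rplus_app (l1 l2 : list R) :
  fold_right Rplus 0 (l1 ++ l2) = fold_right Rplus 0 l1 + fold_right Rplus 0 l2.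
Proof. induction l1; simpl; lra. Qed.

Lemma sumN_ext N f g : (forall k, (k < N)%nat -> f k = g k) -> sumN N f = sumN N g.
Proof.
  intros Hfg. unfold sumN. f_equal. apply map_ext_in.
  intros a Ha. apply in_seq in Ha. apply Hfg. lia.
Qed.

Lemma sumN_minus N f g : sumN N (fun k => f k - g k) = sumN N f - sumN N g.
Proof. unfold sumN. induction (seq 0 N); simpl; lra. Qed.

Lemma sumN_nxt N f : (1 <= N)%nat -> sumN N (fun k => f (nxt N k)) = sumN N f.
Proof.
  intros HN. destruct N as [|M]; [lia |]. unfold sumN.
  assert (Hrot : map (fun k => f (nxt (S M) k)) (seq 0 (S M))
                 = map f (seq 1 M) ++ f 0%nat :: nil).
  { rewrite seq_S, map_app. f_equal.
    - rewrite <- seq_shift, map_map. apply map_ext_in.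
      intros a Ha. apply in_seq in Ha. unfold nxt.
      rewrite Nat.mod_small by lia. f_equal. lia.
    - cbn [map]. unfold nxt. replace (0 + M + 1)%nat with (1 * S M)%nat by lia.
      now rewrite Nat.Div0.mod_mul. }
  rewrite Hrot, fold_right_Rplus_app. simpl. lra.
Qed.

Lemma sumN_telescope N (Z : nat -> R) :
  (1 <= N)%nat -> sumN N (fun k => Z (nxt N k) - Z k) = 0.
Proof. intros HN. rewrite sumN_minus, sumN_nxt by exact HN. ring. Qed.

Section Closure.
Variables (N : nat) (lam mu : R) (x xt xh xth : nat -> R).

Definition corner_term (k : nat) : R :=
  psi (xt k - x k) - psi (lam + x (nxt N k) - xt k)
  + psi (xth k - xt k) - psi (mu + xt (nxt N k) - xth k)
  - psi (xh k - x k) + psi (mu + x (nxt N k) - xh k)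
  - psi (xth k - xh k) + psi (lam + xh (nxt N k) - xth k).

Definition corner_potential (k : nat) : R :=
  xt k - xh k
  + x k * (ln (xt k - x k) - ln (xh k - x k))
  - xt k * (ln (xt k - x k) + ln (lam + x (nxt N k) - xt k) - ln (xth k - xt k))
  + xh k * (ln (xh k - x k) + ln (mu + x (nxt N k) - xh k) - ln (xth k - xh k))
  + (lam - mu) * ln (Rabs (lam - mu + xh k - xt k)).

Lemma Lambda_corner_sumN :
  Lambda N x xt lam + Lambda N xt xth mu - Lambda N x xh mu - Lambda N xh xth lam
  = sumN N corner_term.
Proof. unfold Lambda, sumN, corner_term. induction (seq 0 N); simpl; lra. Qed.

Hypothesis HN : (1 <= N)%nat.
Hypotheses (D1 : Lambda_dom N x xt lam) (D2 : Lambda_dom N xt xth mu)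
           (D3 : Lambda_dom N x xh mu) (D4 : Lambda_dom N xh xth lam).
Hypothesis E : forall k, (k < N)%nat ->
  (xt k - x k) * (lam + x k - xt (prv N k)) = (xh k - x k) * (mu + x k - xh (prv N k)).
Hypothesis E1 : forall k, (k < N)%nat ->
  (xt k - x k) * (lam + x (nxt N k) - xt k) = (xth k - xt k) * (mu + xt k - xth (prv N k)).
Hypothesis E2 : forall k, (k < N)%nat ->
  (xh k - x k) * (mu + x (nxt N k) - xh k) = (xth k - xh k) * (lam + xh k - xth (prv N k)).
Hypothesis E12 : forall k, (k < N)%nat ->
  (xth k - xh k) * (lam + xh (nxt N k) - xth k) = (xth k - xt k) * (mu + xt (nxt N k) - xth k).

Lemma corner_term_telescopic k : (k < N)%nat ->
  corner_term k = corner_potential (nxt N k) - corner_potential k.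
Proof.
  intros Hk.
  pose proof (nxt_lt N k HN) as Hk'.
  pose proof (E _ Hk') as Ek. pose proof (E1 _ Hk') as E1k.
  pose proof (E2 _ Hk') as E2k. pose proof (E12 _ Hk) as E12k.
  rewrite (prv_nxt N k HN Hk) in Ek, E1k, E2k.
  destruct (D1 _ Hk) as [Ha Hb]. destruct (D1 _ Hk') as [Ha' Hb'].
  destruct (D2 _ Hk) as [Hc Hd]. destruct (D2 _ Hk') as [Hc' Hd'].
  destruct (D3 _ Hk) as [He Hf]. destruct (D3 _ Hk') as [He' Hf'].
  destruct (D4 _ Hk) as [Hg Hh]. destruct (D4 _ Hk') as [Hg' Hh'].
  unfold corner_term, corner_potential, psi.
  set (k' := nxt N k) in *.
  pose proof (ln_mult_eq _ _ _ _ Ha' Hb He' Hf Ek) as LE.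
  pose proof (ln_mult_eq _ _ _ _ Ha' Hb' Hc' Hd E1k) as LE1.
  pose proof (ln_mult_eq _ _ _ _ He' Hf' Hg' Hh E2k) as LE2.
  pose proof (ln_mult_eq _ _ _ _ Hg Hh Hc Hd E12k) as LE12.
  pose proof (ln_mult_eq _ _ _ _ Hf Hh Hb Hd
                (corner_cross _ _ _ _ _ _ _ _ Ek E12k He' Hb)) as Lcross.
  pose proof (ln_ratio_Rabs (lam - mu) _ _ _ _ Hh Hb
                (corner_shift _ _ _ _ _ _ _ _ Ek E12k He' Hb)
                (fun HU => Rminus_diag_eq _ _ (corner_shift_degenerate _ _ _ _ _ _ _ _
                                                 Ek E12k He' Hb HU))) as LU.
  (* Each log balance enters multiplied by the variable whose coefficient it cancels. *)
  pose proof (f_equal (Rmult (x k')) LE) as Cx.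
  pose proof (f_equal (Rmult (xt k')) LE1) as Cxt.
  pose proof (f_equal (Rmult (xh k')) LE2) as Cxh.
  pose proof (f_equal (Rmult (xth k)) LE12) as Cxth.
  pose proof (f_equal (Rmult mu) Lcross) as Cmu.
  clearbody k'. clear - Cx Cxt Cxh Cxth Cmu LU. lra.
Qed.

End Closure.

Theorem theorem5 (N : nat) (lam mu : R) (x xt xh xth : nat -> R) :
  (1 <= N)%nat ->
  Lambda_dom N x xt lam -> Lambda_dom N xt xth mu ->
  Lambda_dom N x xh mu -> Lambda_dom N xh xth lam ->
  (forall k, (k < N)%nat ->
     (xt k - x k) * (lam + x k - xt (prv N k))
     = (xh k - x k) * (mu + x k - xh (prv N k))) ->
  (forall k, (k < N)%nat ->
     (xt k - x k) * (lam + x (nxt N k) - xt k)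
     = (xth k - xt k) * (mu + xt k - xth (prv N k))) ->
  (forall k, (k < N)%nat ->
     (xh k - x k) * (mu + x (nxt N k) - xh k)
     = (xth k - xh k) * (lam + xh k - xth (prv N k))) ->
  (forall k, (k < N)%nat ->
     (xth k - xh k) * (lam + xh (nxt N k) - xth k)
     = (xth k - xt k) * (mu + xt (nxt N k) - xth k)) ->
  Lambda N x xt lam + Lambda N xt xth mu - Lambda N x xh mu - Lambda N xh xth lam = 0.
Proof.
  intros HN D1 D2 D3 D4 E E1 E2 E12.
  rewrite Lambda_corner_sumN.
  rewrite (sumN_ext N _ (fun k => corner_potential N lam mu x xt xh xth (nxt N k)
                                  - corner_potential N lam mu x xt xh xth k)).
  - apply sumN_telescope, HN.
  - intros k Hk. eapply corner_term_telescopic; eassumption.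
Qed.
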